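(* Let $m,m'\geq 0$ and $i>0$ be integers. Let $h(t)$ be a rational polynomial of degree at most $m+1$ with $h(t)=t^{m+1}h(1/t)$, and $h'(t)$ a rational polynomial of degree at most $m'+1$ with $h'(t)=t^{m'+1}h'(1/t)$. If $g^{(m,i)}(h(t))\geq 0$ and $g^{(m',i)}(h'(t))\geq 0$ componentwise, then $g^{(m+m'+1,i)}(h(t)h'(t))\geq 0$ componentwise.
   Context: For integers $d\geq 0$ and $i>0$, let $q\geq 0$, $1\leq r\leq i$ be the unique integers with $d+1=qi+r$ and define $P_{d,i}(t)=(1+t+\cdots+t^i)^q(1+t+\cdots+t^r)$; also set $P_{-1,i}(t)=1$. Let $B_{d,i}$ be the ordered list $\big(P_{d,i}(t),\ tP_{d-2,i}(t),\ldots,\ t^{\lfloor (d+1)/2\rfloor}P_{d-2\lfloor (d+1)/2\rfloor,i}(t)\big)$, a basis of the $\mathbb{Q}$-vector space of polynomials of degree at most $d+1$ satisfying $h(t)=t^{d+1}h(1/t)$. For such $h$, $g^{(d,i)}(h(t))=(g_0,\ldots,g_{\lfloor (d+1)/2\rfloor})$ is the vector of coefficients with $h(t)=\sum_j g_j t^jP_{d-2j,i}(t)$. *)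

From HB Require Import structures.
From mathcomp Require Import all_boot all_order all_algebra.
Set Implicit Arguments. Unset Strict Implicit. Unset Printing Implicit Defensive.
Import Order.TTheory GRing.Theory Num.Theory.
Local Open Scope ring_scope.

Definition geomP (i : nat) : {poly rat} := \sum_(k < i.+1) 'X^k.

(* PP n i = P_{n-1,i}(t).  PP 0 i = P_{-1,i} = 1; for n = d+1 >= 1,
   n = q*i + r with 1 <= r <= i, i.e. q = (n-1) %/ i, r = (n-1) %% i + 1. *)
Definition PP (n i : nat) : {poly rat} :=
  if n is n'.+1 then geomP i ^+ (n' %/ i)%N * geomP ((n' %% i).+1)
  else 1.

Definition Pdi (d i : nat) : {poly rat} := PP d.+1 i.

(* h(t) = t^{d+1} h(1/t) with deg h <= d+1, written on coefficients *)
Definition palindromic (d : nat) (h : {poly rat}) : Prop :=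
  (size h <= d.+2)%N /\ forall k : nat, (k <= d.+1)%N -> h`_k = h`_(d.+1 - k).

(* g is the coefficient vector (g_0,...,g_{floor((d+1)/2)}) of h in the basis
   B_{d,i} = (t^j P_{d-2j,i}(t))_j ; note t^j P_{d-2j,i} = 'X^j * PP (d+1-2j) i. *)
Definition is_gvec (d i : nat) (h : {poly rat}) (g : seq rat) : Prop :=
  size g = (d.+1)./2.+1 /\
  h = \sum_(j < size g) g`_j *: ('X^j * PP (d.+1 - j.*2) i).

Definition nonneg_vec (g : seq rat) : bool := all (fun x => 0 <= x) g.

From HB Require Import structures.
From mathcomp Require Import all_boot all_order all_algebra.
From mathcomp Require Import zify ring.
Set Implicit Arguments.
Unset Strict Implicit.
Import Order.TTheory GRing.Theory Num.Theory.
Local Open Scope ring_scope.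

(* Write G_k = 1 + t + ... + t^k (geomP k) and let C_N be the cone of
   nonnegative rational combinations of the basis polynomials
   b_{N,l} = t^l P_{N-1-2l,i}(t), 2l <= N.  The vector g^{(d,i)}(h) is the
   coordinate vector of h on (b_{d+1,l})_l, so the theorem says:
   C_{m+1} * C_{m'+1} is contained in C_{m+m'+2}.
   1. Every P_{n-1,i} equals G_i^q G_s for ANY splitting n = q i + s with
      0 <= s <= i (not only the one with 1 <= s <= i used as definition).
   2. The exchange identity G_{x+1} G_b = G_x G_{b+1} + t^{x+1} G_{b-x-1}
      (x < b) lets us move, by induction, from G_i^q G_x G_y to
      P_{q i + x + y - 1,i} plus shifted basis elements; hence
      P_{a-1,i} P_{b-1,i} lies in C_{a+b}.
   3. Multiplying by t^k maps C_N into C_{N+2k}; with 2. this gives that the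
      cones are closed under products: C_N * C_M is contained in C_{N+M}.
   4. The b_{N,l} have constant-term-one factors P, so they are triangular
      w.r.t. the monomials t^l and hence linearly independent: coordinates
      on them are unique, so an element of C_N has nonnegative coordinates. *)

Lemma geomP0 : geomP 0 = 1.
Proof. by rewrite /geomP big_ord1 expr0. Qed.

Lemma geomPS n : geomP n.+1 = geomP n + 'X^(n.+1).
Proof. by rewrite /geomP big_ord_recr. Qed.

Lemma geomP_addS p q : geomP (p + q).+1 = geomP p + 'X^(p.+1) * geomP q.
Proof.
elim: q => [|q IH]; first by rewrite addn0 geomP0 mulr1 geomPS.
by rewrite addnS geomPS IH geomPS mulrDr -exprD addSn addnS addrA.
Qed.

Lemma geomP_exchange x b : (x < b)%N ->
  geomP x.+1 * geomP b = geomP x * geomP b.+1 + 'X^(x.+1) * geomP (b - x.+1).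
Proof.
move=> lt_xb.
have splitb : geomP b = geomP (b - x.+1) + 'X^(b - x) * geomP x.
  have {1}-> : b = ((b - x.+1) + x).+1%N by lia.
  by rewrite geomP_addS; congr (_ + 'X^_ * _); lia.
have splitbS : geomP b.+1 = geomP b + 'X^(x.+1) * 'X^(b - x).
  by rewrite geomPS -exprD; congr (_ + 'X^_); lia.
rewrite splitbS geomPS splitb; ring.
Qed.

Lemma geomP_coef0 k : (geomP k)`_0 = 1.
Proof.
rewrite /geomP coef_sum big_ord_recl coefXn eqxx big1 ?addr0 // => j _.
by rewrite coefXn.
Qed.

Lemma PP_geomP i q s : (0 < i)%N -> (s <= i)%N ->
  PP (q * i + s) i = geomP i ^+ q * geomP s.
Proof.
move=> i_gt0; case: s => [_|s le_si].
  case: q => [|q]; first by rewrite /= expr0 geomP0 mulr1.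
  have -> : (q.+1 * i + 0 = (q * i + i.-1).+1)%N by rewrite mulSn; lia.
  rewrite /PP divnMDl // modnMDl divn_small ?modn_small ?addn0; try lia.
  by rewrite prednK // geomP0 mulr1 exprSr.
by rewrite addnS /PP divnMDl // modnMDl divn_small ?modn_small ?addn0.
Qed.

Lemma PP_divmod i n : (0 < i)%N ->
  PP n i = geomP i ^+ (n %/ i) * geomP (n %% i).
Proof. by move=> i_gt0; rewrite {1}(divn_eq n i) PP_geomP //; lia. Qed.

(* Each P has constant term 1; this makes the basis below triangular. *)
Lemma PP_coef0 n i : (PP n i)`_0 = 1.
Proof.
case: n => [|n] /=; first by rewrite coef1.
rewrite coef0M geomP_coef0 mulr1.
elim: (n %/ i)%N => [|q IH]; first by rewrite expr0 coef1.
by rewrite exprS coef0M IH geomP_coef0 mulr1.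
Qed.

(* The basis element b_{N,l} = t^l P_{N-1-2l,i}; for N = d+1 these are the
   members of B_{d,i}, matching the summands of is_gvec. *)
Definition gbasis (i N l : nat) : {poly rat} := 'X^l * PP (N - l.*2) i.

Inductive Cone (i N : nat) : {poly rat} -> Prop :=
| Cone0 : Cone i N 0
| ConeB l : (l.*2 <= N)%N -> Cone i N (gbasis i N l)
| ConeD p q : Cone i N p -> Cone i N q -> Cone i N (p + q)
| ConeZ (a : rat) p : 0 <= a -> Cone i N p -> Cone i N (a *: p).

Lemma cone_monomial i N l n : (l.*2 <= N)%N -> n = (N - l.*2)%N ->
  Cone i N ('X^l * PP n i).
Proof. by move=> le_lN ->; exact: ConeB. Qed.

Lemma cone_PP i N : Cone i N (PP N i).
Proof. by rewrite -[PP N i]mul1r -(expr0 'X); apply: cone_monomial; lia. Qed.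

Lemma cone_sum i N (I : Type) (r : seq I) (P : pred I) (F : I -> {poly rat}) :
  (forall x, P x -> Cone i N (F x)) -> Cone i N (\sum_(x <- r | P x) F x).
Proof. by move=> coneF; apply: big_ind => //; [exact: Cone0 | exact: ConeD]. Qed.

Lemma cone_shift i N k p : Cone i N p -> Cone i (N + k.*2) ('X^k * p).
Proof.
elim=> [|l le_lN|p1 p2 _ IH1 _ IH2|a p1 a_ge0 _ IH].
- by rewrite mulr0; exact: Cone0.
- by rewrite /gbasis mulrA -exprD; apply: cone_monomial; lia.
- by rewrite mulrDr; exact: ConeD.
- by rewrite -scalerAr; exact: ConeZ.
Qed.

Lemma cone_geomP i q x y : (0 < i)%N -> (x <= y)%N -> (y <= i)%N ->
  Cone i (q * i + x + y) (geomP i ^+ q * (geomP x * geomP y)).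
Proof.
move=> i_gt0; elim: x y => [|x IH] y le_xy le_yi.
  by rewrite geomP0 mul1r -PP_geomP // addn0; exact: cone_PP.
have [lt_yi|ge_yi] := ltnP y i.
  rewrite geomP_exchange // mulrDr; apply: ConeD.
    have -> : (q * i + x.+1 + y = q * i + x + y.+1)%N by lia.
    apply: IH; lia.
  by rewrite mulrCA -PP_geomP; [apply: cone_monomial|..]; lia.
have -> : y = i by lia.
rewrite mulrA mulrAC -exprSr -PP_geomP; try lia.
rewrite mulSn; have -> : (q * i + x.+1 + i = i + q * i + x.+1)%N by lia.
exact: cone_PP.
Qed.

Lemma cone_PP_mul i a b : (0 < i)%N -> Cone i (a + b) (PP a i * PP b i).
Proof.
move=> i_gt0; rewrite !PP_divmod // mulrACA -exprD.
have -> : (a + b = (a %/ i + b %/ i) * i + a %% i + b %% i)%N.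
  by rewrite {1}(divn_eq a i) {1}(divn_eq b i); lia.
have [le_ab|lt_ba] := leqP (a %% i) (b %% i).
  by apply: cone_geomP => //; lia.
rewrite (mulrC (geomP (a %% i))) -addnA (addnC (a %% i)%N) addnA.
by apply: cone_geomP => //; lia.
Qed.

Lemma cone_mul_gbasis i N M l q : (0 < i)%N -> (l.*2 <= N)%N ->
  Cone i M q -> Cone i (N + M) (gbasis i N l * q).
Proof.
move=> i_gt0 le_lN; elim=> [|k le_kM|q1 q2 _ IH1 _ IH2|a q1 a_ge0 _ IH].
- by rewrite mulr0; exact: Cone0.
- rewrite /gbasis mulrACA -exprD.
  have -> : (N + M = (N - l.*2) + (M - k.*2) + (l + k).*2)%N by lia.
  by apply: cone_shift; exact: cone_PP_mul.
- by rewrite mulrDr; exact: ConeD.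
- by rewrite -scalerAr; exact: ConeZ.
Qed.

Lemma cone_mul i N M p q : (0 < i)%N ->
  Cone i N p -> Cone i M q -> Cone i (N + M) (p * q).
Proof.
move=> i_gt0 coneP coneQ; elim: coneP => [|l le_lN|p1 p2 _ IH1 _ IH2|a p1 a_ge0 _ IH].
- by rewrite mul0r; exact: Cone0.
- exact: cone_mul_gbasis.
- by rewrite mulrDl; exact: ConeD.
- by rewrite -scalerAl; exact: ConeZ.
Qed.

Lemma cone_coords i N p : Cone i N p -> exists c : nat -> rat,
  (forall l, 0 <= c l) /\ p = \sum_(l < N./2.+1) c l *: gbasis i N l.
Proof.
elim=> [|l le_lN|p1 p2 _ [c1 [c1_ge0 ->]] _ [c2 [c2_ge0 ->]]|
         a p1 a_ge0 _ [c [c_ge0 ->]]].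
- by exists (fun=> 0); split=> //; rewrite big1 // => k _; rewrite scale0r.
- exists (fun k => (k == l)%:R); split=> [k|]; first exact: ler0n.
  have lt_l : (l < N./2.+1)%N by rewrite ltnS geq_half_double.
  rewrite (bigD1 (Ordinal lt_l)) //= eqxx scale1r big1 ?addr0 // => k ne_kl.
  by rewrite (negPf (ne_kl : k != l :> nat)) scale0r.
- exists (fun l => c1 l + c2 l); split=> [l|]; first exact: addr_ge0.
  by rewrite -big_split; apply: eq_bigr => l _; rewrite scalerDl.
- exists (fun l => a * c l); split=> [l|]; first exact: mulr_ge0.
  by rewrite scaler_sumr; apply: eq_bigr => l _; rewrite scalerA.
Qed.

(* By strong induction on l:
   b_{N,l} has valuation exactly l, so the coefficient of t^l in the
   combination is e l once all earlier coordinates are known to vanish. *)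
Lemma gbasis_free i N n (e : nat -> rat) :
  \sum_(l < n) e l *: gbasis i N l = 0 -> forall l, (l < n)%N -> e l = 0.
Proof.
move=> comb0 l; elim/ltn_ind: l => k IH lt_kn.
have := congr1 (fun p : {poly rat} => p`_k) comb0.
rewrite /= coef0 coef_sum (bigD1 (Ordinal lt_kn)) //= coefZ /gbasis coefXnM.
rewrite ltnn subnn PP_coef0 mulr1 big1 ?addr0 // => l ne_lk.
rewrite coefZ coefXnM; case: ltnP => [_|le_lk]; first by rewrite mulr0.
have lt_lk : (l < k)%N.
  by rewrite ltn_neqAle le_lk andbT; apply: contraNneq ne_lk => eq_lk; apply/eqP/val_inj.
by rewrite IH // mul0r.
Qed.

Lemma gvec_cone d i h g : is_gvec d i h g -> nonneg_vec g -> Cone i d.+1 h.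
Proof.
move=> [size_g ->] /(all_nthP 0) g_ge0; apply: cone_sum => j _.
apply: ConeZ; first exact: g_ge0.
by apply: cone_monomial; rewrite // -geq_half_double -ltnS -size_g.
Qed.

(* Conversely, by uniqueness of coordinates, the g-vector of an element of
   the cone C_{d+1} is nonnegative. *)
Lemma cone_gvec_nonneg d i h G : Cone i d.+1 h -> is_gvec d i h G -> nonneg_vec G.
Proof.
move=> /cone_coords [c [c_ge0 eq_hc]] [sizeG eq_hG].
apply/(all_nthP 0) => l; rewrite sizeG => lt_l.
suff /eqP : G`_l - c l = 0 by rewrite subr_eq0 => /eqP ->.
apply: (@gbasis_free i d.+1 _ (fun l => G`_l - c l)) lt_l.
under eq_bigr do rewrite scalerBl.
by rewrite sumrB -eq_hc eq_hG sizeG subrr.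
Qed.

(* Proposition 4.1: the cone property of nonnegative g-vectors is preserved
   by products. *)
Theorem proposition4p1 (m m' i : nat) (hi : (0 < i)%N) (h h' : {poly rat}) :
  palindromic m h -> palindromic m' h' ->
  (exists g, is_gvec m i h g /\ nonneg_vec g) ->
  (exists g', is_gvec m' i h' g' /\ nonneg_vec g') ->
  forall G, is_gvec (m + m' + 1) i (h * h') G -> nonneg_vec G.
Proof.
move=> _ _ [g [gvec_h g_ge0]] [g' [gvec_h' g'_ge0]] G gvec_hh'.
apply: cone_gvec_nonneg gvec_hh'.
have -> : (m + m' + 1).+1 = (m.+1 + m'.+1)%N by lia.
exact: cone_mul hi (gvec_cone gvec_h g_ge0) (gvec_cone gvec_h' g'_ge0).
Qed.
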